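(* Let $C$ be a compact convex polyhedron in $\mathbb R^n$ and $W$ a linear subspace of $\mathbb R^n$, and set $\operatorname{dep}(C,W)=\{x\in C : (x+W)\cap C^{\circ}\neq\emptyset\}$, where $C^\circ$ is the relative interior of $C$. If $D$ is a face of $C$, then $D\cap\operatorname{dep}(C,W)$ is either empty or contains the relative interior $D^\circ$ of $D$. *)

From HB Require Import structures.
From mathcomp Require Import all_boot all_order all_algebra.
From mathcomp Require Import classical_sets reals.
Set Implicit Arguments. Unset Strict Implicit. Unset Printing Implicit Defensive.
Import Order.TTheory GRing.Theory Num.Theory.
Local Open Scope ring_scope.
Local Open Scope classical_set_scope.

Section Defs.
Variables (R : realType) (n : nat).
Local Notation V := 'rV[R]_n.

Definition dotv (u v : V) : R := \sum_(i < n) u 0 i * v 0 i.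

(* compact convex polyhedron: a bounded intersection of finitely many closed
   half-spaces (such a set is closed, hence compact iff bounded) *)
Definition is_compact_polyhedron (C : set V) : Prop :=
  (exists (m : nat) (A : 'I_m -> V) (b : 'I_m -> R),
      C = [set x | forall i, dotv (A i) x <= b i]) /\
  (exists M : R, forall x, C x -> dotv x x <= M).

(* faces: intersections of C with a supporting (or trivial) hyperplane;
   c = 0, d = 0 gives C itself, c = 0, d = 1 gives the empty face *)
Definition is_face (C D : set V) : Prop :=
  exists (c : V) (d : R), (forall x, C x -> dotv c x <= d) /\
     D = [set x | C x /\ dotv c x = d].

Definition aff_hull (S : set V) : set V :=
  [set x | exists (k : nat) (p : 'I_k -> V) (l : 'I_k -> R),
      (forall i, S (p i)) /\ \sum_(i < k) l i = 1 /\ x = \sum_(i < k) l i *: p i].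

Definition relint (S : set V) : set V :=
  [set x | S x /\ exists e : R, 0 < e /\
      forall y, aff_hull S y -> dotv (y - x) (y - x) < e ^+ 2 -> S y].

Definition dep (C : set V) (W : {vspace V}) : set V :=
  [set x | C x /\ exists w, w \in W /\ relint C (x + w)].

End Defs.

(* If x0 lies in D and in dep(C, W), say x0 + w0 is relatively interior to C,
   then every y in the relative interior of D can be pushed slightly beyond y
   inside D, to z := y + t (y - x0).  Then y is a convex combination
   (1 - mu) z + mu x0 with mu > 0, so y + mu w0 = (1 - mu) z + mu (x0 + w0) is
   a proper convex combination of a point of C and a relative interior point
   of C, hence itself relatively interior to C; as mu w0 lies in W, y is in
   dep(C, W). *)

From HB Require Import structures.
From mathcomp Require Import all_boot all_order all_algebra.
From mathcomp Require Import classical_sets reals.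
From mathcomp Require Import boolp ring lra.
Set Implicit Arguments. Unset Strict Implicit. Unset Printing Implicit Defensive.
Import Order.TTheory GRing.Theory Num.Theory.
Local Open Scope ring_scope.
Local Open Scope classical_set_scope.

Section Convexity.
Variables (R : realType) (n : nat).
Local Notation V := 'rV[R]_n.

Lemma dotvDr (u v w : V) : dotv u (v + w) = dotv u v + dotv u w.
Proof. by rewrite /dotv -big_split; apply: eq_bigr => i _; rewrite mxE mulrDr. Qed.

Lemma dotvZr (u v : V) c : dotv u (c *: v) = c * dotv u v.
Proof. by rewrite /dotv mulr_sumr; apply: eq_bigr => i _; rewrite mxE mulrCA. Qed.

Lemma dotvZZ (u : V) c : dotv (c *: u) (c *: u) = c ^+ 2 * dotv u u.
Proof. by rewrite /dotv mulr_sumr; apply: eq_bigr => i _; rewrite !mxE; ring. Qed.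

Lemma dotvv_ge0 (u : V) : 0 <= dotv u u.
Proof. by apply: sumr_ge0 => i _; rewrite -expr2 sqr_ge0. Qed.

Definition convex_set (C : set V) := forall a b l, C a -> C b -> 0 <= l -> l <= 1 ->
  C ((1 - l) *: a + l *: b).

Lemma halfspaces_convex m (A : 'I_m -> V) (b : 'I_m -> R) :
  convex_set [set x | forall i, dotv (A i) x <= b i].
Proof.
move=> x y l Hx Hy l0 l1 i /=; rewrite dotvDr !dotvZr.
by move: (Hx i) (Hy i) => hx hy; nra.
Qed.

Lemma compact_polyhedron_convex (C : set V) :
  is_compact_polyhedron C -> convex_set C.
Proof. by move=> [[m [A [b ->]]] _]; apply: halfspaces_convex. Qed.

Lemma face_subset (C D : set V) : is_face C D -> D `<=` C.
Proof. by case=> c [d [_ ->]] x []. Qed.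

Lemma subset_aff_hull (S : set V) : S `<=` aff_hull S.
Proof.
move=> x Sx; exists 1, (fun=> x), (fun=> 1).
by rewrite !big_ord1 scale1r.
Qed.

Lemma aff_hull_comb (S : set V) a y s : S a -> aff_hull S y ->
  aff_hull S ((1 - s) *: a + s *: y).
Proof.
move=> Sa [k [p [l [Sp [l1 ->]]]]].
exists k.+1, (fun i => if unlift ord0 i is Some j then p j else a),
  (fun i => if unlift ord0 i is Some j then s * l j else 1 - s).
split; first by move=> i; case: (unlift ord0 i).
rewrite !big_ord_recl /= unlift_none.
under eq_bigr do rewrite liftK.
under [X in _ /\ _ = _ + X]eq_bigr do rewrite liftK -scalerA.
by rewrite -mulr_sumr l1 -scaler_sumr; split; first ring.
Qed.

Lemma relint_prolong (S : set V) x y : S x -> relint S y ->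
  exists2 t, 0 < t & S (y + t *: (y - x)).
Proof.
move=> Sx [Sy [e [e0 ball_e]]].
pose N := dotv (y - x) (y - x); have N0 : 0 <= N := dotvv_ge0 _.
pose t := e / (1 + N); have t0 : 0 < t by rewrite divr_gt0 //; lra.
have et : e = t * (1 + N) by rewrite mulfVK // gt_eqF //; lra.
exists t => //; apply: ball_e.
  have -> : y + t *: (y - x) = (1 - (1 + t)) *: x + (1 + t) *: y.
    by apply/rowP => i; rewrite !mxE; ring.
  by apply: aff_hull_comb => //; apply: subset_aff_hull.
by rewrite addrAC subrr add0r dotvZZ -/N et; nra.
Qed.

Lemma relint_convex_comb (C : set V) a b l : convex_set C -> C a -> relint C b ->
  0 < l -> l <= 1 -> relint C ((1 - l) *: a + l *: b).
Proof.
move=> cvxC Ca [Cb [e [e0 ball_e]]] l0 l1.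
split; first by apply: cvxC => //; apply: ltW.
exists (l * e); split => [|y aff_y yc_lt]; first exact: mulr_gt0.
have ln0 : l != 0 by rewrite gt_eqF.
pose b' := (1 - l^-1) *: a + l^-1 *: y.
have b'b : b' - b = l^-1 *: (y - ((1 - l) *: a + l *: b)).
  by apply/rowP => i; rewrite !mxE; field.
have Cb' : C b'.
  apply: ball_e; first exact: aff_hull_comb.
  rewrite b'b dotvZZ exprVn ltr_pdivrMl ?exprn_gt0 //.
  by rewrite -exprMn.
have -> : y = (1 - l) *: a + l *: b' by apply/rowP => i; rewrite !mxE; field.
by apply: cvxC => //; lra.
Qed.

Lemma relint_subset_dep (C D : set V) (W : {vspace V}) x0 :
  convex_set C -> D `<=` C -> D x0 -> dep C W x0 -> relint D `<=` dep C W.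
Proof.
move=> cvxC DC Dx0 [_ [w0 [Ww0 x0w0_int]]] y Dy_int.
have [t t0 Dz] := relint_prolong Dx0 Dy_int.
pose mu := t / (1 + t).
have mu_gt0 : 0 < mu by rewrite divr_gt0 //; lra.
have mu_le1 : mu <= 1 by rewrite ler_pdivrMr; lra.
split; first by apply: DC; case: Dy_int.
exists (mu *: w0); split; first exact: memvZ.
have -> : y + mu *: w0 = (1 - mu) *: (y + t *: (y - x0)) + mu *: (x0 + w0).
  by apply/rowP => i; rewrite /mu !mxE; field; lra.
exact: relint_convex_comb cvxC (DC _ Dz) x0w0_int mu_gt0 mu_le1.
Qed.

End Convexity.

Theorem mainTheorem5 (R : realType) (n : nat) (C : set 'rV[R]_n)
    (W : {vspace 'rV[R]_n}) (D : set 'rV[R]_n) :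
  is_compact_polyhedron C -> is_face C D ->
  (D `&` dep C W = set0) \/ (relint D `<=` D `&` dep C W).
Proof.
move=> polyC faceD.
have [[x0 [Dx0 dep_x0]]|no_meet] := pselect (exists x, (D `&` dep C W) x).
  right => y Dy_int; split; first by case: Dy_int.
  exact: relint_subset_dep (compact_polyhedron_convex polyC)
    (face_subset faceD) Dx0 dep_x0 y Dy_int.
by left; apply/seteqP; split => // x Dx; apply: no_meet; exists x.
Qed.
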